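(* For every integer $m\ge 0$, $\zeta^\star(\bar 1,\{1\}_m)=-\mathrm{Li}_{m+1}\!\left(\tfrac12\right)$.
   Context: For nonzero integers $s_1,\dots,s_k$, with $\operatorname{sgn}(s)=1$ if $s>0$ and $-1$ if $s<0$, the multiple zeta star value is $\zeta^\star(s_1,\dots,s_k)=\sum_{n_1\ge n_2\ge\cdots\ge n_k\ge 1}\prod_{j=1}^k n_j^{-|s_j|}\operatorname{sgn}(s_j)^{n_j}$. A barred entry $\bar p$ denotes the negative entry $-p$. The notation $\{1\}_m$ means the entry $1$ repeated $m$ times. $\mathrm{Li}_s(x)=\sum_{n\ge1}x^n/n^s$ is the polylogarithm. *)

From HB Require Import structures.
From mathcomp Require Import all_boot all_order all_algebra.
From mathcomp Require Import all_classical all_reals all_analysis.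
Set Implicit Arguments. Unset Strict Implicit. Unset Printing Implicit Defensive.
Import Order.TTheory GRing.Theory Num.Theory.
Local Open Scope ring_scope.

Definition sgnz {R : realType} (a : int) : R := if (0 < a)%R then 1 else -1.

(* Truncated multiple zeta star sum:
   zs_trunc [:: s1; ...; sk] N
     = sum_{N >= n1 >= n2 >= ... >= nk >= 1} prod_j sgn(s_j)^{n_j} / n_j^{|s_j|} *)
Fixpoint zs_trunc {R : realType} (s : seq int) (N : nat) : R :=
  match s with
  | [::] => 1
  | a :: s' => \sum_(1 <= n < N.+1)
                 (sgnz a ^+ n / (n%:R ^+ `|a|%N)) * zs_trunc s' n
  end.

Definition Li {R : realType} (s : nat) (x : R) : R :=
  limn (fun N : nat => \sum_(1 <= n < N) (x ^+ n / (n%:R ^+ s))).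

From HB Require Import structures.
From mathcomp Require Import all_boot all_order all_algebra.
From mathcomp Require Import all_classical all_reals all_analysis.
From mathcomp Require Import ring lra.
Set Implicit Arguments. Unset Strict Implicit. Unset Printing Implicit Defensive.
Import Order.TTheory GRing.Theory Num.Theory numFieldNormedType.Exports.
Local Open Scope classical_set_scope.
Local Open Scope ring_scope.

(* Put b(i,j) = i! j! / (i+j+1)! * sum_{j+1 >= k_1 >= ... >= k_m >= 1} prod_l 1/(i+k_l).
   This array satisfies Pascal's rule b(i,j) = b(i,j+1) + b(i+1,j); its first
   row b(0,n-1) = zeta*_n({1}_m)/n carries the terms of zeta*(bar 1,{1}_m) and
   its first column b(n-1,0) = 1/n^(m+1) those of Li_{m+1}.  Euler's series
   transformation, valid for any Pascal array, rewrites the alternating sum of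
   the first row as the sum of b(k,0)/2^(k+1) plus half a diagonal remainder.
   For a nonnegative array that remainder is bounded by a convolution of the
   first row with 2^-k, and it tends to 0 because zeta*_n({1}_m) <= 2^m sqrt n. *)

Section EulerTransform.
Variables (R : numFieldType) (b : nat -> nat -> R).
Hypothesis pascal : forall i j, b i j = b i j.+1 + b i.+1 j.

Definition euler_diag N : R :=
  \sum_(i < N.+1) (-1) ^+ (N - i) * b i (N - i)%N / 2 ^+ i.

Lemma euler_diagS N :
  euler_diag N.+1 =
  euler_diag N + 2 * ((-1) ^+ N.+1 * b 0 N.+1) - b N.+1 0 / 2 ^+ N.+1.
Proof.
set A := \sum_(i < N.+1) (-1) ^+ (N - i) * b i (N - i).+1 / 2 ^+ i.
set B := \sum_(i < N.+1) (-1) ^+ (N - i) * b i.+1 (N - i) / 2 ^+ i.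
have diag_split : euler_diag N = A + B.
  by rewrite /euler_diag -big_split /=; apply: eq_bigr => i _; rewrite pascal; ring.
have diag_last : euler_diag N.+1 = - A + b N.+1 0 / 2 ^+ N.+1.
  rewrite /euler_diag big_ord_recr /= subnn expr0 mul1r -sumrN; congr (_ + _).
  by apply: eq_bigr => i _; rewrite subSn ?leq_ord // exprS; ring.
have diag_first : euler_diag N.+1 = (-1) ^+ N.+1 * b 0 N.+1 + B / 2.
  rewrite /euler_diag big_ord_recl subn0 expr0 divr1 mulr_suml; congr (_ + _).
  by apply: eq_bigr => i _; rewrite lift0 subSS exprSr invfM mulrA.
have two_neq0 : (2 : R) != 0 by rewrite pnatr_eq0.
have B_eq : B = 2 * (euler_diag N.+1 - (-1) ^+ N.+1 * b 0 N.+1).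
  by rewrite diag_first; field.
by rewrite diag_split B_eq diag_last; ring.
Qed.

Lemma euler_transform N :
  \sum_(k < N.+1) (-1) ^+ k * b 0 k =
  \sum_(k < N.+1) b k 0 / 2 ^+ k.+1 + euler_diag N / 2.
Proof.
have two_neq0 : (2 : R) != 0 by rewrite pnatr_eq0.
elim: N => [|N IH].
  by rewrite /euler_diag !big_ord1 /= expr0 !mul1r divr1 expr1; field.
rewrite big_ord_recr [in RHS]big_ord_recr /= IH euler_diagS (exprS _ N.+1).
by field; rewrite expf_neq0.
Qed.

End EulerTransform.

Lemma geometric_convolution_cvg0 (R : realType) (c : R ^nat) :
  (forall n, 0 <= c n) -> c @ \oo --> 0 ->
  (fun N => \sum_(i < N.+1) c (N - i)%N / 2 ^+ i) @ \oo --> 0.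
Proof.
move=> c_ge0 c_cvg0; set u := fun N => _.
have u_ge0 N : 0 <= u N.
  by apply: sumr_ge0 => i _; rewrite divr_ge0 ?exprn_ge0.
have uS N : u N.+1 = c N.+1 + u N / 2.
  rewrite /u big_ord_recl subn0 expr0 divr1 mulr_suml; congr (_ + _).
  by apply: eq_bigr => i _; rewrite lift0 subSS exprSr invfM mulrA.
apply/cvgrPdist_le => e e_gt0.
have e3_gt0 : 0 < e / 3 by rewrite divr_gt0.
move/cvgrPdist_le/(_ _ e3_gt0): c_cvg0 => -[J _ cJ].
have u_tail d : u (J + d)%N <= 2 * (e / 3) + u J / 2 ^+ d.
  elim: d => [|d IH]; first by rewrite addn0 expr0 divr1 lerDr; lra.
  have : `|0 - c (J + d).+1| <= e / 3 by apply: cJ; rewrite /= leqW ?leq_addr.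
  rewrite sub0r normrN ger0_norm // addnS uS exprSr invfM [u J * _]mulrA.
  move: IH; set q := u J / 2 ^+ d; lra.
have half_lt1 : `|2^-1 : R| < 1 by rewrite ger0_norm ?invf_lt1 ?ltr1n.
move/cvgrPdist_le/(_ _ e3_gt0): (cvg_geometric (u J) half_lt1) => -[D _ geoD].
exists (J + D)%N => // N /= JD_le_N.
have J_le_N : (J <= N)%N := leq_trans (leq_addr D J) JD_le_N.
have geo_le : u J / 2 ^+ (N - J) <= e / 3.
  have := geoD (N - J)%N; rewrite /= leq_subRL // => /(_ JD_le_N).
  by rewrite sub0r normrN ger0_norm ?mulr_ge0 ?exprn_ge0 // exprVn.
rewrite sub0r normrN ger0_norm // -(subnKC J_le_N).
move: (u_tail (N - J)%N); lra.
Qed.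

Section PascalArray.
Variables (R : realType) (b : nat -> nat -> R).
Hypotheses (pascal : forall i j, b i j = b i j.+1 + b i.+1 j)
           (b_ge0 : forall i j, 0 <= b i j).

Lemma pascal_le_first_row i j : b i j <= b 0 j.
Proof.
elim: i => [|i IH] //; apply: le_trans IH.
by rewrite [leRHS]pascal lerDr b_ge0.
Qed.

Lemma euler_diag_cvg0 : b 0 @ \oo --> 0 -> euler_diag b @ \oo --> 0.
Proof.
move=> first_row_cvg0.
pose conv N := \sum_(i < N.+1) b 0 (N - i)%N / 2 ^+ i.
have conv_cvg0 : conv @ \oo --> 0.
  exact: geometric_convolution_cvg0 (b_ge0 0) first_row_cvg0.
apply: (@squeeze_cvgr _ _ _ _ (- conv) conv) => //; last first.
  by rewrite -oppr0; exact: cvgN.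
apply: nearW => N /=; rewrite -ler_norml /euler_diag.
apply: le_trans (ler_norm_sum _ _ _) _; apply: ler_sum => i _.
rewrite !normrM normr_sign mul1r ger0_norm // ger0_norm ?invr_ge0 ?exprn_ge0 //.
by rewrite ler_wpM2r ?invr_ge0 ?exprn_ge0 ?pascal_le_first_row.
Qed.

End PascalArray.

Section ZstarOnes.
Context {R : numFieldType}.

(* [zstar_ones m i n] is sum_{n >= k_1 >= ... >= k_m >= 1} prod_l 1/(i+k_l);
   for i = 0 this is the truncated zeta*_n({1}_m). *)
Fixpoint zstar_ones (m i n : nat) : R :=
  if m is m'.+1 then \sum_(1 <= k < n.+1) zstar_ones m' i k / (i + k)%:R
  else 1.

Arguments zstar_ones : simpl never.

Lemma zstar_ones0 i n : zstar_ones 0 i n = 1.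
Proof. by []. Qed.

Lemma zstar_onesS m i n :
  zstar_ones m.+1 i n = \sum_(1 <= k < n.+1) zstar_ones m i k / (i + k)%:R.
Proof. by []. Qed.

Lemma zstar_ones_recr m i n :
  zstar_ones m.+1 i n.+1 = zstar_ones m.+1 i n + zstar_ones m i n.+1 / (i + n.+1)%:R.
Proof. by rewrite !zstar_onesS big_nat_recr. Qed.

Lemma zstar_ones_recl m i n :
  zstar_ones m.+1 i n.+1 =
  zstar_ones m i 1 / i.+1%:R + \sum_(1 <= k < n.+1) zstar_ones m i k.+1 / (i + k.+1)%:R.
Proof. by rewrite zstar_onesS big_nat_recl // addn1. Qed.

Lemma zstar_ones_shift m i n :
  zstar_ones m.+1 i n.+1 = zstar_ones m.+1 i.+1 n + zstar_ones m i n.+1 / i.+1%:R.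
Proof.
elim: m n => [|m IH] n.
  rewrite zstar_ones_recl zstar_onesS addrC; congr (_ + _).
  by apply: eq_bigr => k _; rewrite addSnnS.
have at1 : zstar_ones m.+1 i 1 = zstar_ones m i 1 / i.+1%:R.
  by rewrite zstar_onesS big_nat1 addn1.
rewrite (zstar_ones_recl m.+1) (zstar_ones_recl m i n) at1.
under eq_bigr => k _ do rewrite IH mulrDl mulrAC.
rewrite big_split /= -mulr_suml.
have -> : \sum_(1 <= k < n.+1) zstar_ones m.+1 i.+1 k / (i + k.+1)%:R =
          zstar_ones m.+2 i.+1 n.
  by rewrite zstar_onesS; apply: eq_bigr => k _; rewrite addSnnS.
rewrite mulrDl; ring.
Qed.

Lemma zstar_ones_pascal m i n :
  (i + n.+1)%:R * zstar_ones m i n =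
  n%:R * zstar_ones m i n.+1 + i.+1%:R * zstar_ones m i.+1 n.
Proof.
have natD : (i + n.+1)%:R = n%:R + i.+1%:R :> R by rewrite -natrD !addnS addnC.
case: m => [|m]; first by rewrite !mulr1 natD.
have recr := zstar_ones_recr m i n.
have shiftE : zstar_ones m.+1 i.+1 n = zstar_ones m.+1 i n +
    zstar_ones m i n.+1 / (i + n.+1)%:R - zstar_ones m i n.+1 / i.+1%:R.
  by rewrite -recr zstar_ones_shift addrK.
rewrite recr shiftE natD; field.
by rewrite [1 + _]addrC natr1 -natrD !pnatr_eq0 addnS.
Qed.

Lemma zstar_ones_ge0 m i n : 0 <= zstar_ones m i n.
Proof.
elim: m n => [|m IH] n; first exact: ler01.
by rewrite zstar_onesS; apply: sumr_ge0 => k _; rewrite divr_ge0.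
Qed.

Lemma zstar_ones_at1 m i : zstar_ones m i 1 = i.+1%:R ^- m.
Proof.
elim: m => [|m IH]; first by rewrite invr1.
by rewrite zstar_onesS big_nat1 IH addn1 exprSr invfM.
Qed.

(* The array b of the header: the integral of x^i (1-x)^j (-log x)^m / m!
   over [0,1], whence Pascal's rule. *)
Definition zstar_beta m i j : R :=
  i`!%:R * j`!%:R / (i + j).+1`!%:R * zstar_ones m i j.+1.

Lemma zstar_beta_pascal m i j :
  zstar_beta m i j = zstar_beta m i j.+1 + zstar_beta m i.+1 j.
Proof.
have key := zstar_ones_pascal m i j.+1.
rewrite !addnS in key.
rewrite /zstar_beta addnS addSn !factS !natrM.
have fact_neq0 k : (k`!%:R : R) != 0 by rewrite pnatr_eq0 -lt0n fact_gt0.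
have -> : zstar_ones m i j.+1 = (j.+1%:R * zstar_ones m i j.+2 +
      i.+1%:R * zstar_ones m i.+1 j.+1) / (i + j).+2%:R.
  by rewrite -key mulrAC mulfV ?mul1r // pnatr_eq0.
by field; rewrite fact_neq0 -!natrD nat1r !pnatr_eq0.
Qed.

Lemma zstar_beta_ge0 m i j : 0 <= zstar_beta m i j.
Proof. by rewrite /zstar_beta mulr_ge0 ?zstar_ones_ge0 // divr_ge0 // mulr_ge0. Qed.

Lemma zstar_beta_first_col m i : zstar_beta m i 0 = i.+1%:R ^- m.+1.
Proof.
have fact_neq0 : (i`!%:R : R) != 0 by rewrite pnatr_eq0 -lt0n fact_gt0.
rewrite /zstar_beta addn0 zstar_ones_at1 factS natrM mulr1 exprSr.
by field; rewrite fact_neq0 nat1r expf_eq0 pnatr_eq0 andbF.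
Qed.

Lemma zstar_beta_first_row m j : zstar_beta m 0 j = zstar_ones m 0 j.+1 / j.+1%:R.
Proof.
have fact_neq0 : (j`!%:R : R) != 0 by rewrite pnatr_eq0 -lt0n fact_gt0.
rewrite /zstar_beta add0n factS natrM mul1r.
by field; rewrite fact_neq0 nat1r pnatr_eq0.
Qed.

End ZstarOnes.

Section ZstarOnesBound.
Context {R : realType}.

Lemma sqrtr_div_self (x : R) : 0 < x -> Num.sqrt x / x = (Num.sqrt x)^-1.
Proof.
move=> x_gt0; have sx_neq0 : Num.sqrt x != 0 by rewrite gt_eqF ?sqrtr_gt0.
by rewrite -{2}(sqr_sqrtr (ltW x_gt0)) expr2 invfM mulrA mulfV ?mul1r.
Qed.

Lemma sum_inv_sqrt_le n :
  \sum_(1 <= k < n.+1) (Num.sqrt (k%:R : R))^-1 <= 2 * Num.sqrt n%:R.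
Proof.
elim: n => [|n IH]; first by rewrite big_geq // sqrtr0 mulr0.
rewrite big_nat_recr //=; apply: le_trans (lerD IH (lexx _)) _.
set s := Num.sqrt n%:R; set t := Num.sqrt n.+1%:R.
have s_ge0 : 0 <= s := sqrtr_ge0 _.
have t_gt0 : 0 < t by rewrite sqrtr_gt0 ltr0n.
have t2 : t ^+ 2 = s ^+ 2 + 1 by rewrite !sqr_sqrtr ?ler0n // -natr1.
suff : t^-1 <= 2 * (t - s) by lra.
rewrite -[t^-1]mul1r ler_pdivrMr //; nra.
Qed.

Lemma zstar_ones_le_sqrt m n :
  (0 < n)%N -> zstar_ones m 0 n <= 2 ^+ m * Num.sqrt (n%:R : R).
Proof.
elim: m n => [|m IH] n n_gt0.
  by rewrite zstar_ones0 expr0 mul1r -{1}sqrtr1 ler_sqrt ?ler0n // ler1n.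
rewrite zstar_onesS exprSr -mulrA.
apply: le_trans (_ : \sum_(1 <= k < n.+1) 2 ^+ m * (Num.sqrt (k%:R : R))^-1 <= _).
  apply: ler_sum_nat => k /andP[k_gt0 _].
  rewrite add0n -sqrtr_div_self ?ltr0n // mulrA ler_wpM2r ?invr_ge0 ?ler0n //.
  exact: IH.
by rewrite -mulr_sumr ler_wpM2l ?exprn_ge0 ?sum_inv_sqrt_le.
Qed.

Lemma zstar_beta_first_row_cvg0 m : zstar_beta (R := R) m 0 @ \oo --> 0.
Proof.
have bound j : zstar_beta m 0 j <= 2 ^+ m * Num.sqrt (harmonic j : R).
  rewrite zstar_beta_first_row /= sqrtrV ?ler0n // -sqrtr_div_self ?ltr0n //.
  by rewrite mulrA ler_wpM2r ?invr_ge0 ?ler0n ?zstar_ones_le_sqrt.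
pose h j := 2 ^+ m * Num.sqrt (harmonic j : R).
have sqrt_harmonic_cvg0 : (fun j => Num.sqrt (harmonic j : R)) @ \oo --> 0.
  rewrite -sqrtr0; apply: continuous_cvg; [exact: sqrt_continuous | exact: cvg_harmonic].
have h_cvg0 : h @ \oo --> 0 by rewrite -(mulr0 (2 ^+ m)); apply: cvgMl_tmp.
apply: (@squeeze_cvgr _ _ _ _ (- h) h) => //; last by rewrite -oppr0; exact: cvgN.
by apply: nearW => j /=; rewrite -ler_norml ger0_norm ?zstar_beta_ge0.
Qed.

End ZstarOnesBound.

Definition polylog_partial (R : realType) (s : nat) (x : R) (N : nat) : R :=
  \sum_(1 <= n < N) x ^+ n / n%:R ^+ s.

Lemma is_cvg_polylog_partial (R : realType) s (x : R) :
  0 <= x < 1 -> cvgn (polylog_partial s x).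
Proof.
case/andP => x_ge0 x_lt1.
have term_ge0 n : 0 <= x ^+ n / n%:R ^+ s by rewrite divr_ge0 ?exprn_ge0.
apply: nondecreasing_is_cvgn.
  apply/nondecreasing_seqP => -[|N]; first by rewrite /polylog_partial !big_geq.
  by rewrite /polylog_partial [leRHS]big_nat_recr //= lerDl.
exists (1 - x)^-1 => _ [N _ <-].
apply: (@le_trans _ _ (\sum_(0 <= n < N) x ^+ n)).
  case: N => [|N]; first by rewrite /polylog_partial !big_geq.
  rewrite /polylog_partial [leRHS]big_ltn // expr0 -[leLHS]add0r lerD //.
  apply: ler_sum_nat => n /andP[n_gt0 _].
  rewrite ler_pdivrMr ?exprn_gt0 ?ltr0n // ler_peMr ?exprn_ge0 //.
  by rewrite exprn_ege1 // ler1n.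
have geomE : (\sum_(0 <= n < N) x ^+ n) * (1 - x) = 1 - x ^+ N.
  by rewrite big_mkord mulrC -opprB mulNr -subrX1 opprB.
rewrite -[_^-1]div1r ler_pdivlMr ?subr_gt0 // geomE.
by rewrite lerBlDr lerDl exprn_ge0.
Qed.

Lemma zs_trunc_ones (R : realType) m N :
  zs_trunc (nseq m (1 : int)) N = zstar_ones m 0 N :> R.
Proof.
elim: m N => [|m IH] N //; rewrite zstar_onesS /=.
by apply: eq_bigr => n _; rewrite IH /sgnz ltr01 expr1n expr1 mul1r mulrC add0n.
Qed.

Lemma zs_trunc_bar1_ones_euler (R : realType) m N :
  zs_trunc ((-1 : int) :: nseq m (1 : int)) N.+1 =
  - polylog_partial m.+1 (1 / 2) N.+2 - euler_diag (@zstar_beta R m) N / 2.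
Proof.
have first_row : zs_trunc ((-1 : int) :: nseq m (1 : int)) N.+1 =
            - \sum_(k < N.+1) (-1) ^+ k * zstar_beta m 0 k :> R.
  rewrite /= big_add1 big_mkord -sumrN; apply: eq_bigr => k _.
  rewrite zs_trunc_ones zstar_beta_first_row exprS expr1.
  have -> : sgnz (-1 : int) = -1 :> R by [].
  ring.
have first_col : polylog_partial m.+1 (1 / 2 : R) N.+2 =
            \sum_(k < N.+1) zstar_beta m k 0 / 2 ^+ k.+1.
  rewrite /polylog_partial big_add1 big_mkord; apply: eq_bigr => k _.
  by rewrite zstar_beta_first_col expr_div_n expr1n mul1r mulrC.
by rewrite first_row (euler_transform (@zstar_beta_pascal R m) N) first_col opprD.
Qed.

Theorem mainTheorem2 (R : realType) (m : nat) :
  (fun N : nat => zs_trunc (R := R) ((-1 : int) :: nseq m (1 : int)) N) @ \oo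
    --> - Li (m.+1) (1 / 2 : R).
Proof.
rewrite -cvg_shiftS /mk_sequence.
under [X in X @ \oo --> _]funext => N do rewrite zs_trunc_bar1_ones_euler.
rewrite -(subr0 (- Li m.+1 (1 / 2 : R))); apply: cvgB.
  apply: cvgN.
  rewrite (cvg_shiftS (fun N => polylog_partial m.+1 (1 / 2 : R) N.+1)) cvg_shiftS.
  by apply: is_cvg_polylog_partial; rewrite div1r invr_ge0 invf_lt1 ?ler0n ?ltr1n.
rewrite -(mul0r (2^-1 : R)); apply: cvgMr_tmp.
exact: euler_diag_cvg0 (@zstar_beta_pascal R m) (@zstar_beta_ge0 R m)
  (zstar_beta_first_row_cvg0 m).
Qed.
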